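(* Let $U$ be a finite set and $\mathscr{S}$ a collection of subsets of $U$ of size at most $k$ that is closed under taking subsets. Suppose $\mathscr{C}$ and $\mathscr{C}'$ are $k$-set covers of $U$ (partitions of $U$ into members of $\mathscr{S}$), where $\mathscr{C}$ consists of $b$ sets of which $b_1$ are 1-element sets, and $\mathscr{C}'$ consists of $b'$ sets of which $b_1'$ are 1-element sets. Then there exists a $k$-set cover $\mathscr{C}''$ of $U$ (a partition of $U$ into members of $\mathscr{S}$) with $\min(b,b')$ sets and $\min(b_1,b_1')$ 1-element sets. *)

From mathcomp Require Import all_boot.
Set Implicit Arguments. Unset Strict Implicit. Unset Printing Implicit Defensive.

Definition set_cover (T : finType) (S : {set {set T}}) (U : {set T})
  (P : {set {set T}}) : Prop :=
  partition P U /\ P \subset S.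

Definition nsingletons (T : finType) (P : {set {set T}}) : nat :=
  #|[set A in P | #|A| == 1]|.

From mathcomp Require Import all_boot.
Set Implicit Arguments. Unset Strict Implicit. Unset Printing Implicit Defensive.

(* Assume #|C| <= #|C'| and that C has more singletons than C' (otherwise C or C'
   itself works).  Move from C towards C' through partitions of U that are hybrid
   for a shrinking set L: each block is either a member of S inside L (old) or part
   of a block of C' disjoint from L (new); C is hybrid for L = U.  A step removes one
   point from L, keeps the number of blocks and loses at most one singleton: an old
   singleton simply becomes new; otherwise, having more singletons than C', some new
   block is a proper part of a block B of C', and two new pieces of B are merged
   while a point is split off an old block.  Old blocks exist because a partition
   into new blocks refines C' and so has at least #|C'| > #|C| blocks.  As the
   number of singletons drops by at most one per step, it reaches that of C'. *)

Section Partitions.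
Variable T : finType.
Implicit Types (A X Y : {set T}) (P D N Q : {set {set T}}).

Lemma cover_setU P Q : cover (P :|: Q) = cover P :|: cover Q.
Proof. exact: bigcup_setU. Qed.

Lemma disjoint_cover_setD P D :
  trivIset P -> D \subset P -> [disjoint cover (P :\: D) & cover D].
Proof.
move=> /trivIsetP tP sDP; apply/bigcup_disjointP => Y YD.
rewrite disjoint_sym; apply/bigcup_disjointP => X /[!inE] /andP[XnD XP].
by apply: (tP Y X (subsetP sDP Y YD) XP); apply: contraNneq XnD => <-.
Qed.

Lemma disjoint_replace P D N :
  trivIset P -> D \subset P -> partition N (cover D) -> [disjoint P :\: D & N].
Proof.
move=> tP sDP /and3P[/eqP covN _ N0]; rewrite -setI_eq0; apply/eqP/setP => X.
rewrite !inE; apply/negbTE/andP => -[XPD XN].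
have /set0Pn[x xX] : X != set0 by apply: contraNneq N0 => <-.
have xPD : x \in cover (P :\: D) by apply/bigcupP; exists X; rewrite ?inE.
have xN : x \in cover N by apply/bigcupP; exists X.
by move: (disjoint_cover_setD tP sDP); rewrite -covN => /disjointFr/(_ xPD); rewrite xN.
Qed.

Lemma partition_replace P D N U :
  partition P U -> D \subset P -> partition N (cover D) ->
  partition ((P :\: D) :|: N) U.
Proof.
move=> pP sDP pN; have tP := partition_trivIset pP.
have /and3P[/eqP covN tN N0] := pN.
apply/and3P; split.
- rewrite cover_setU covN -cover_setU setUC.
  by rewrite -{1}(setIidPr sDP) setID (cover_partition pP).
- by apply: trivIsetU tN _; [exact: trivIsetD | rewrite covN disjoint_cover_setD].
- by rewrite !inE (partition0 pP) andbF.
Qed.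

Lemma card_setI_replace P D N Q : D \subset P -> [disjoint P :\: D & N] ->
  #|((P :\: D) :|: N) :&: Q| + #|D :&: Q| = #|P :&: Q| + #|N :&: Q|.
Proof.
move=> sDP dPN; have dPNQ : [disjoint (P :\: D) :&: Q & N :&: Q].
  by apply: disjointWl (subsetIl _ _) _; apply: disjointWr (subsetIl _ _) _.
rewrite setIUl cardsU (disjoint_setI0 dPNQ) cards0 subn0 addnAC; congr (_ + _).
by rewrite setIDAC addnC -(cardsID D (P :&: Q)) setIAC (setIidPr sDP).
Qed.

Lemma card_replace P D N : D \subset P -> [disjoint P :\: D & N] ->
  #|(P :\: D) :|: N| + #|D| = #|P| + #|N|.
Proof. by move=> sDP /(card_setI_replace setT sDP); rewrite !setIT. Qed.

Lemma nsingletonsE P : nsingletons P = #|P :&: [set X : {set T} | #|X| == 1]|.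
Proof. by rewrite /nsingletons setIdE. Qed.

Lemma nsingletons_replace P D N : D \subset P -> [disjoint P :\: D & N] ->
  nsingletons ((P :\: D) :|: N) + nsingletons D = nsingletons P + nsingletons N.
Proof. by rewrite !nsingletonsE; apply: card_setI_replace. Qed.

Lemma nsingletons_le_card P : nsingletons P <= #|P|.
Proof. by rewrite nsingletonsE subset_leq_card ?subsetIl. Qed.

Lemma nsingletons_set1 A : nsingletons [set A] = (#|A| == 1).
Proof.
rewrite nsingletonsE; case: (boolP (#|A| == 1)) => A1.
  by rewrite (setIidPl _) ?cards1 // sub1set inE.
apply/eqP; rewrite cards_eq0 -subset0; apply/subsetP => X.
by rewrite !inE => /andP[/eqP->]; rewrite (negbTE A1).
Qed.

Lemma nsingletons_gt0 P x : [set x] \in P -> 0 < nsingletons P.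
Proof.
by move=> xP; apply/card_gt0P; exists [set x]; rewrite !inE xP cards1.
Qed.

Lemma card_le_refinement P Q U : partition P U -> partition Q U ->
  {in P, forall X, exists2 B, B \in Q & X \subset B} -> #|Q| <= #|P|.
Proof.
move=> pP pQ sPQ; have tQ := partition_trivIset pQ.
pose f X := if [pick x in X] is Some x then pblock Q x else set0.
apply: leq_trans (leq_imset_card f P); apply/subset_leq_card/subsetP => B BQ.
have [x xB] := set0Pn _ (partition_neq0 pQ BQ).
have xP : x \in cover P by rewrite (cover_partition pP) (subsetP (partitionS pQ BQ)).
apply/imsetP; exists (pblock P x); first exact: pblock_mem.
have [B' B'Q sXB'] := sPQ _ (pblock_mem xP).
rewrite /f; case: pickP => [y yX | /(_ x)]; last by rewrite mem_pblock xP.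
rewrite (def_pblock tQ B'Q (subsetP sXB' y yX)) -(def_pblock tQ BQ xB).
by rewrite (def_pblock tQ B'Q (subsetP sXB' x _)) ?mem_pblock.
Qed.

Definition split_block P A x := (P :\: [set A]) :|: [set A :\ x; [set x]].

Definition merge_blocks P X Y := (P :\: [set X; Y]) :|: [set X :|: Y].

Lemma partition_split1 A x : x \in A -> A != [set x] ->
  partition [set A :\ x; [set x]] (cover [set A]).
Proof.
move=> xA Ax; apply/and3P; split.
- by rewrite cover_setU !cover1 setUC setD1K.
- apply/trivIsetP => X Y /[!inE] /orP[]/eqP-> /orP[]/eqP->; rewrite ?eqxx // => _.
    by rewrite disjoint_sym disjoints1 setD11.
  by rewrite disjoints1 setD11.
- rewrite !inE negb_or eq_sym setD_eq0 subset1 negb_or Ax /=.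
  by rewrite [set0 == _]eq_sym; apply/andP; split; apply/set0Pn; exists x; rewrite ?inE.
Qed.

Lemma partition_merge2 X Y : X != set0 ->
  partition [set X :|: Y] (cover [set X; Y]).
Proof.
move=> X0; rewrite /partition cover1 cover_setU !cover1 eqxx trivIset1 inE.
by rewrite eq_sym setU_eq0 negb_and X0.
Qed.

Section SplitMerge.
Variables (U : {set T}) (P : {set {set T}}).
Hypothesis pP : partition P U.

Section Split.
Variables (A : {set T}) (x : T).
Hypotheses (AP : A \in P) (xA : x \in A) (Ax : A != [set x]).

Let sDP : [set A] \subset P. Proof. by rewrite sub1set. Qed.
Let pN := partition_split1 xA Ax.
Let dPN := disjoint_replace (partition_trivIset pP) sDP pN.

Lemma card_split_block : #|split_block P A x| = #|P|.+1.
Proof.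
have := card_replace sDP dPN; rewrite cards1 cards2.
suff -> : A :\ x != [set x] by rewrite addn1 addn2 => -[].
by apply: contraTneq (set11 x) => <-; rewrite setD11.
Qed.

Lemma nsingletons_split_block : nsingletons P < nsingletons (split_block P A x).
Proof.
have A1 : #|A| != 1.
  by apply: contra Ax => /cards1P[y Ay]; move: xA; rewrite Ay inE => /eqP <-.
have := nsingletons_replace sDP dPN; rewrite nsingletons_set1 (negbTE A1) addn0 => ->.
by rewrite -addn1 leq_add2l (@nsingletons_gt0 _ x) // !inE eqxx orbT.
Qed.
End Split.

Section Merge.
Variables (X Y : {set T}).
Hypotheses (XP : X \in P) (YP : Y \in P).

Let sDP : [set X; Y] \subset P. Proof. by rewrite subUset !sub1set XP YP. Qed.
Let pN := partition_merge2 Y (partition_neq0 pP XP).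
Let dPN := disjoint_replace (partition_trivIset pP) sDP pN.

Lemma card_merge_blocks : X != Y -> #|merge_blocks P X Y|.+1 = #|P|.
Proof.
by move=> XY; have := card_replace sDP dPN; rewrite cards1 cards2 XY addn1 addn2 => -[].
Qed.

Lemma nsingletons_merge_blocks : nsingletons P <= (nsingletons (merge_blocks P X Y)).+2.
Proof.
rewrite -addn2; apply: leq_trans (leq_addr (nsingletons [set X :|: Y]) _) _.
rewrite -(nsingletons_replace sDP dPN) leq_add2l.
by apply: leq_trans (nsingletons_le_card _) _; rewrite cards2 ltnS leq_b1.
Qed.
End Merge.
End SplitMerge.
End Partitions.

Section Hybrid.
Variables (T : finType) (U : {set T}) (S C' : {set {set T}}).
Hypothesis S_down : forall A B : {set T}, A \in S -> B \subset A -> B \in S.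
Hypothesis C'_cover : set_cover S U C'.
Implicit Types (x : T) (A B L X Y : {set T}) (P D N : {set {set T}}).

Definition old_block L A := (A \subset L) && (A \in S).
Definition new_block L A := [disjoint A & L] && [exists B in C', A \subset B].
Definition hybrid P L :=
  partition P U /\ {in P, forall A, old_block L A || new_block L A}.

Lemma hybrid_old P L A x : hybrid P L -> A \in P -> x \in A -> x \in L ->
  old_block L A.
Proof.
case=> _ hP AP xA xL; case/orP: (hP A AP) => // /andP[dAL _].
by rewrite (disjointFr dAL xA) in xL.
Qed.

Lemma hybrid_new P L A x : hybrid P L -> A \in P -> x \in A -> x \notin L ->
  new_block L A.
Proof.
case=> _ hP AP xA xL; case/orP: (hP A AP) => // /andP[sAL _].
by rewrite (subsetP sAL x xA) in xL.
Qed.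

Lemma hybrid_subset P L : hybrid P L -> P \subset S.
Proof.
case=> _ hP; apply/subsetP => A /hP /orP[/andP[] // | /andP[_ /exists_inP[B BC sAB]]].
exact: S_down (subsetP C'_cover.2 B BC) sAB.
Qed.

Lemma new_block_set1 L x : x \in U -> x \notin L -> new_block L [set x].
Proof.
have [pC' _] := C'_cover; move=> xU xL; rewrite /new_block disjoints1 xL /=.
have xC' : x \in cover C' by rewrite (cover_partition pC').
by apply/exists_inP; exists (pblock C' x); rewrite ?pblock_mem // sub1set mem_pblock.
Qed.

Lemma block_shrink L L' A : L' \subset L -> [disjoint A & L :\: L'] ->
  old_block L A || new_block L A -> old_block L' A || new_block L' A.
Proof.
move=> sL'L dA /orP[/andP[sAL AS] | /andP[dAL AC']].
  rewrite /old_block AS andbT; apply/orP; left; apply/subsetP => y yA.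
  by move: (disjointFr dA yA); rewrite inE (subsetP sAL y yA) andbT => /negbFE.
by rewrite /new_block AC' (disjointWr sL'L dAL) orbT.
Qed.

Lemma hybrid_replace P D N L L' : hybrid P L -> D \subset P ->
    partition N (cover D) -> L' \subset L -> L \subset L' :|: cover D ->
    {in N, forall A, old_block L' A || new_block L' A} ->
  hybrid ((P :\: D) :|: N) L'.
Proof.
move=> [pP hP] sDP pN sL'L sL hN; split; first exact: partition_replace pP sDP pN.
move=> A /setUP[APD | AN]; last exact: hN.
have AP : A \in P by move: APD; rewrite inE => /andP[].
apply: block_shrink sL'L _ (hP A AP).
have sAPD : A \subset cover (P :\: D) by apply: bigcup_max APD _.
apply: disjointWl sAPD _; apply: disjointWr (disjoint_cover_setD _ sDP).
  by rewrite subDset.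
exact: partition_trivIset pP.
Qed.

Lemma hybrid_release P L x : hybrid P L -> [set x] \in P -> hybrid P (L :\ x).
Proof.
move=> [pP hP] xP; split=> // A AP; have [<- | Ax] := eqVneq [set x] A.
  by rewrite new_block_set1 ?orbT ?setD11 // (subsetP (partitionS pP xP)) ?set11.
apply: block_shrink (subD1set L x) _ (hP A AP).
apply: disjointWr (_ : L :\: (L :\ x) \subset [set x]) _.
  by apply/subsetP => y; rewrite !inE => /andP[/nandP[/negbNE | /negP] //].
by rewrite disjoint_sym; apply: (trivIsetP (partition_trivIset pP)).
Qed.

Lemma hybrid_split P L A x : hybrid P L -> A \in P -> x \in A -> x \in L ->
  A != [set x] -> hybrid (split_block P A x) (L :\ x).
Proof.
move=> hPL AP xA xL Ax; have /andP[sAL AS] := hybrid_old hPL AP xA xL.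
have xU : x \in U := subsetP (partitionS hPL.1 AP) x xA.
apply: hybrid_replace hPL _ (partition_split1 xA Ax) (subD1set L x) _ _.
- by rewrite sub1set.
- apply/subsetP => y yL; rewrite cover1 !inE yL andbT.
  by case: eqVneq => [-> | //]; rewrite xA orbT.
- move=> X /[!inE] /orP[]/eqP->.
    by rewrite /old_block setSD // (S_down AS (subD1set A x)).
  by rewrite new_block_set1 ?orbT ?setD11.
Qed.

Lemma hybrid_merge P L X Y B : hybrid P L -> X \in P -> Y \in P ->
  B \in C' -> X :|: Y \subset B -> [disjoint X :|: Y & L] ->
  hybrid (merge_blocks P X Y) L.
Proof.
move=> hPL XP YP BC' sXYB dXYL.
apply: hybrid_replace hPL _ (partition_merge2 Y (partition_neq0 hPL.1 XP))
  (subxx L) (subsetUl L _) _.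
- by rewrite subUset !sub1set XP YP.
- move=> Z /[!inE] /eqP->; apply/orP; right.
  by rewrite /new_block dXYL; apply/exists_inP; exists B.
Qed.

Lemma hybrid_meets P L : hybrid P L -> #|P| < #|C'| -> U :&: L != set0.
Proof.
move=> hPL; apply: contraTneq => UL0; rewrite -leqNgt.
have [pC' _] := C'_cover.
apply: card_le_refinement hPL.1 pC' _ => A AP.
have [x xA] := set0Pn _ (partition_neq0 hPL.1 AP).
have xL : x \notin L.
  apply: contraTN (partitionS hPL.1 AP) => xL; apply/negP => /subsetP/(_ x xA) xU.
  by move/setP/(_ x): UL0; rewrite !inE xU xL.
by have /andP[_ /exists_inP[B]] := hybrid_new hPL AP xA xL; exists B.
Qed.

Lemma hybrid_new_block_notin P L : hybrid P L ->
    {in L, forall x, [set x] \notin P} -> nsingletons C' < nsingletons P ->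
  exists2 R, R \in P & new_block L R && (R \notin C').
Proof.
move=> hPL oldS; case: (boolP [exists R in P, new_block L R && (R \notin C')]).
  by case/exists_inP => R; exists R.
move/exists_inPn => newC'; rewrite ltnNge => /negP[]; rewrite !nsingletonsE.
apply/subset_leq_card/subsetP => X /[!inE] /andP[XP X1]; rewrite X1 andbT.
have [x Xx] := cards1P X1; have xX : x \in X by rewrite Xx set11.
have xL : x \notin L by apply: contraL XP; rewrite Xx; apply: oldS.
by have := newC' X XP; rewrite (hybrid_new hPL XP xX xL) negbK.
Qed.

Lemma hybrid_split_merge P L A x X Y B : hybrid P L ->
    A \in P -> x \in A -> x \in L -> A != [set x] ->
    X \in split_block P A x -> Y \in split_block P A x -> X != Y ->
    B \in C' -> X :|: Y \subset B -> [disjoint X :|: Y & L :\ x] ->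
  exists P' L', [/\ hybrid P' L', #|L'| < #|L|, #|P'| = #|P| &
                    nsingletons P <= (nsingletons P').+1].
Proof.
move=> hPL AP xA xL Ax XP YP XY BC' sXYB dXYL.
have hP1 := hybrid_split hPL AP xA xL Ax; have pP1 := hP1.1.
exists (merge_blocks (split_block P A x) X Y), (L :\ x); split.
- exact: hybrid_merge hP1 XP YP BC' sXYB dXYL.
- by rewrite (cardsD1 x L) xL.
- by apply: succn_inj; rewrite (card_merge_blocks pP1) // (card_split_block hPL.1).
- rewrite -ltnS; apply: leq_trans (nsingletons_split_block hPL.1 AP xA Ax) _.
  exact: (nsingletons_merge_blocks pP1 XP YP).
Qed.

Lemma hybrid_step_proper P L R B : hybrid P L -> #|P| < #|C'| ->
    {in L, forall x, [set x] \notin P} ->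
    R \in P -> [disjoint R & L] -> B \in C' -> R \proper B ->
  exists P' L', [/\ hybrid P' L', #|L'| < #|L|, #|P'| = #|P| &
                    nsingletons P <= (nsingletons P').+1].
Proof.
move=> hPL ltPC' oldS RP dRL BC' /properP[sRB [v vB vR]].
have [pP _] := hPL; have [pC' _] := C'_cover.
have vP : v \in cover P by rewrite (cover_partition pP) (subsetP (partitionS pC' BC')).
set A2 := pblock P v; have A2P : A2 \in P by apply: pblock_mem.
have vA2 : v \in A2 by rewrite mem_pblock.
have RA2 : R != A2 by apply: contraNneq vR => ->.
have [vL | vL] := boolP (v \in L).
  have A2v : A2 != [set v] by apply: contraNneq (oldS v vL) => <-.
  apply: (hybrid_split_merge hPL A2P vA2 vL A2v (X := [set v]) (Y := R) _ _ _ BC').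
  - by rewrite !inE eqxx !orbT.
  - by rewrite !inE RP RA2.
  - by apply: contraNneq vR => <-; rewrite set11.
  - by rewrite subUset sub1set vB sRB.
  - rewrite -setI_eq0 setIUl setU_eq0 !setI_eq0 disjoints1 setD11 /=.
    exact: disjointWr (subD1set L v) dRL.
have /andP[dA2L /exists_inP[B2 B2C' sA2B2]] := hybrid_new hPL A2P vA2 vL.
have eB2 : B2 = B.
  have tC' := partition_trivIset pC'.
  by rewrite -(def_pblock tC' B2C' (subsetP sA2B2 v vA2)) (def_pblock tC' BC' vB).
have /set0Pn[u /setIP[uU uL]] := hybrid_meets hPL ltPC'.
have uP : u \in cover P by rewrite (cover_partition pP).
set A := pblock P u; have AP : A \in P by apply: pblock_mem.
have uA : u \in A by rewrite mem_pblock.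
have Au : A != [set u] by apply: contraNneq (oldS u uL) => <-.
have RA : R != A by apply: contraTneq uA => <-; rewrite (disjointFl dRL uL).
have A2A : A2 != A by apply: contraTneq uA => <-; rewrite (disjointFl dA2L uL).
apply: (hybrid_split_merge hPL AP uA uL Au (X := R) (Y := A2) _ _ RA2 BC').
- by rewrite !inE RP RA.
- by rewrite !inE A2P A2A.
- by rewrite subUset sRB -eB2.
- rewrite -setI_eq0 setIUl setU_eq0 !setI_eq0.
  by rewrite !(disjointWr (subD1set L u)).
Qed.

Lemma hybrid_step P L : hybrid P L -> #|P| < #|C'| ->
    nsingletons C' < nsingletons P ->
  exists P' L', [/\ hybrid P' L', #|L'| < #|L|, #|P'| = #|P| &
                    nsingletons P <= (nsingletons P').+1].
Proof.
move=> hPL ltPC' ltC'P.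
have [/exists_inP[x xL xP] | /exists_inPn oldS] := boolP [exists x in L, [set x] \in P].
  exists P, (L :\ x); split=> //; first exact: hybrid_release.
  by rewrite (cardsD1 x L) xL.
have [R RP /andP[/andP[dRL /exists_inP[B BC' sRB]] RC']] :=
  hybrid_new_block_notin hPL oldS ltC'P.
have ltRB : R \proper B.
  by rewrite properEneq sRB andbT; apply: contraNneq RC' => ->.
exact: hybrid_step_proper hPL ltPC' oldS RP dRL BC' ltRB.
Qed.

Lemma hybrid_reach P L : hybrid P L -> #|P| < #|C'| ->
    nsingletons C' <= nsingletons P ->
  exists P', [/\ set_cover S U P', #|P'| = #|P| & nsingletons P' = nsingletons C'].
Proof.
have [n] := ubnP #|L|; elim: n P L => // n IHn P L /ltnSE leLn hPL ltPC' leC'P.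
have [eqC'P | neC'P] := eqVneq (nsingletons P) (nsingletons C').
  by exists P; split=> //; split; [exact: hPL.1 | exact: hybrid_subset hPL].
have ltC'P : nsingletons C' < nsingletons P by rewrite ltn_neqAle eq_sym neC'P.
have [P' [L' [hPL' ltL' eqP' leP']]] := hybrid_step hPL ltPC' ltC'P.
have [|||P'' [cP'' eqP'' nP'']] := IHn P' L' _ hPL'; first exact: leq_trans ltL' leLn.
- by rewrite eqP'.
- by rewrite -ltnS (leq_trans ltC'P leP').
by exists P''; rewrite eqP'' eqP'.
Qed.
End Hybrid.

Lemma set_cover_card_le (T : finType) (U : {set T}) (S : {set {set T}})
    (S_down : forall A B : {set T}, A \in S -> B \subset A -> B \in S)
    (C C' : {set {set T}}) :
    set_cover S U C -> set_cover S U C' -> #|C| <= #|C'| ->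
  exists C'', [/\ set_cover S U C'', #|C''| = #|C| &
                  nsingletons C'' = minn (nsingletons C) (nsingletons C')].
Proof.
move=> [pC sCS] hC' leCC'.
case: leqP => [_ | ltC'C]; first by exists C.
have [eqCC' | neCC'] := eqVneq #|C| #|C'|; first by exists C'; split.
have hCU : hybrid U S C' C U.
  by split=> // A CA; rewrite /old_block (partitionS pC CA) (subsetP sCS).
have ltCC' : #|C| < #|C'| by rewrite ltn_neqAle neCC'.
exact: (hybrid_reach S_down hC' hCU ltCC' (ltnW ltC'C)).
Qed.

Theorem lemma2 (T : finType) (U : {set T}) (k : nat) (S : {set {set T}})
  (HSU : forall A, A \in S -> A \subset U)
  (HSk : forall A, A \in S -> #|A| <= k)
  (HSdown : forall A B : {set T}, A \in S -> B \subset A -> B \in S)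
  (C C' : {set {set T}})
  (HC : set_cover S U C) (HC' : set_cover S U C') :
  exists C'' : {set {set T}},
    [/\ set_cover S U C'',
        #|C''| = minn #|C| #|C'| &
        nsingletons C'' = minn (nsingletons C) (nsingletons C')].
Proof.
have [leCC' | /ltnW leC'C] := leqP #|C| #|C'|; first exact: set_cover_card_le.
by rewrite minnC; apply: set_cover_card_le.
Qed.
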